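(* Let $m>l\ge1$ be integers and let $Q=(q_{ij})$ be an $m\times l$ real matrix such that for each $j=1,\dots,l$, $q_{jj}>\sum_{i\ne j,\,1\le i\le m}|q_{ij}|$. Let $\mathcal A$ be the set of all $l\times l$ submatrices of $Q$ (obtained by selecting $l$ of its $m$ rows), and let $S_1\in\mathcal A$ be the matrix formed by the first $l$ rows of $Q$. Then $\det S_1=\max_{S\in\mathcal A}|\det S|$. *)

From mathcomp Require Import all_boot all_order all_algebra.
Set Implicit Arguments. Unset Strict Implicit. Unset Printing Implicit Defensive.
Import Order.TTheory GRing.Theory Num.Theory.
Local Open Scope ring_scope.

(* The l x l submatrix of Q : 'M_(m,l) formed by the rows selected by f,
   where f : 'I_l -> 'I_m is strictly increasing (a choice of l of the m rows,
   kept in their original order). *)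
Definition row_selection (m l : nat) (f : 'I_l -> 'I_m) : Prop :=
  forall i j : 'I_l, (i < j)%N -> (f i < f j)%N.

Definition submx_rows (R : Type) (m l : nat) (Q : 'M[R]_(m, l)) (f : 'I_l -> 'I_m)
  : 'M[R]_l := rowsub f Q.

Definition first_rows (R : Type) (m l : nat) (hlm : (l <= m)%N) (Q : 'M[R]_(m, l))
  : 'M[R]_l := rowsub (widen_ord hlm) Q.

From mathcomp Require Import all_boot all_order all_algebra.
From mathcomp Require Import ring lra.
Import Order.TTheory GRing.Theory Num.Theory.
Set Implicit Arguments.
Unset Strict Implicit.
Unset Printing Implicit Defensive.
Local Open Scope ring_scope.

(* Induction on l by one step of Gaussian elimination with pivot q = Q 0 0,
   which is positive by dominance of column 0.  Clearing the first row by
   column operations leaves the Schur complement Q' of q, again column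
   diagonally dominant, and det S_1 = q * det S_1'.  For any other choice of
   rows, expand along column 0: each minor is either a choice of rows of Q' or
   contains the zero row, so by induction |det S| <= q * det S_1' when row 0 is
   chosen, and |det S| <= (\sum_(i != 0) |Q i 0|) * det S_1' < q * det S_1'
   otherwise. *)

Lemma ler_sum_inj (R : numDomainType) (n m : nat) (f : 'I_n -> 'I_m)
    (P : pred 'I_m) (G : 'I_m -> R) :
  injective f -> (forall k, P (f k)) -> (forall i, P i -> 0 <= G i) ->
  \sum_k G (f k) <= \sum_(i | P i) G i.
Proof.
move=> finj Pf G0; set F := f @: [set: 'I_n].
have -> : \sum_k G (f k) = \sum_(i in F) G i.
  rewrite big_imset /=; last by move=> ? ? _ _; apply: finj.
  by apply: eq_bigl => k; rewrite inE.
rewrite (bigID (mem F) P) /=.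
have -> : \sum_(i in F) G i = \sum_(i | P i && (i \in F)) G i.
  by apply: eq_bigl => i; case: imsetP => [[k _ ->]|_]; rewrite ?Pf ?andbF.
by rewrite lerDl sumr_ge0 // => i /andP[/G0].
Qed.

Definition col_diag_dominant (R : numDomainType) (m l : nat) (hlm : (l <= m)%N)
    (Q : 'M[R]_(m, l)) : Prop :=
  forall j : 'I_l,
    \sum_(i < m | i != widen_ord hlm j) `|Q i j| < Q (widen_ord hlm j) j.

Section PivotElimination.
Variables (R : fieldType) (m l : nat) (Q : 'M[R]_(m.+1, l.+1)).

Definition elim_col0 : 'M[R]_(m.+1, l) :=
  \matrix_(i, j) (Q i (lift ord0 j) - Q i ord0 * Q ord0 (lift ord0 j) / Q ord0 ord0).

Definition schur0 : 'M[R]_(m, l) := row' ord0 elim_col0.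

(* Valid for every pivot, even Q 0 0 = 0 (where x / 0 = 0): right
   multiplication by the unitriangular E adds multiples of column 0 to the
   other columns. *)
Lemma det_rowsub_col0 (g : 'I_l.+1 -> 'I_m.+1) :
  \det (rowsub g Q) =
  \sum_k Q (g k) ord0 * ((-1) ^+ k * \det (rowsub (g \o lift k) elim_col0)).
Proof.
pose E : 'M[R]_l.+1 := \matrix_(a, b)
  (if a == b then 1 else if a == ord0 then - (Q ord0 b / Q ord0 ord0) else 0).
have detE : \det E = 1.
  rewrite -det_tr det_trig; first by rewrite big1 // => i _; rewrite !mxE eqxx.
  apply/is_trig_mxP => a b ab; rewrite !mxE.
  case: eqP => [ba|_]; first by rewrite ba ltnn in ab.
  by case: eqP => // b0; rewrite b0 ltn0 in ab.
have QE_col0 i : (Q *m E) i ord0 = Q i ord0.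
  rewrite !mxE (bigD1 ord0) //= big1 ?addr0 => [|k k0]; first by rewrite mxE eqxx mulr1.
  by rewrite mxE (negbTE k0) mulr0.
have QE_lift : col' ord0 (Q *m E) = elim_col0.
  apply/matrixP => i j; rewrite !mxE (bigD1 (lift ord0 j)) //=.
  rewrite (bigD1 ord0) ?neq_lift //= big1 ?addr0.
    by rewrite !mxE eqxx mulr1 (negbTE (neq_lift _ _)) eqxx mulrN mulrA.
  by move=> k /andP[k1 k0]; rewrite mxE (negbTE k1) (negbTE k0) mulr0.
rewrite -[LHS]mulr1 -[in LHS]detE -det_mulmx mul_rowsub_mx (expand_det_col _ ord0).
apply: eq_bigr => k _; rewrite /cofactor addn0 mxE QE_col0.
by rewrite -QE_lift; congr (_ * (_ * \det _)); apply/matrixP => r c; rewrite !mxE.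
Qed.

Hypothesis pivot_neq0 : Q ord0 ord0 != 0.

Lemma elim_col0_row0 j : elim_col0 ord0 j = 0.
Proof. by rewrite mxE mulrAC divff // mul1r subrr. Qed.

Lemma det_rowsub_elim_row0 (h : 'I_l -> 'I_m.+1) r :
  h r = ord0 -> \det (rowsub h elim_col0) = 0.
Proof.
move=> hr; rewrite (expand_det_row _ r) big1 // => c _.
by rewrite mxE hr elim_col0_row0 mul0r.
Qed.

Lemma det_rowsub_pivot (g : 'I_l.+1 -> 'I_m.+1) k0 : g k0 = ord0 ->
  \det (rowsub g Q) =
  Q ord0 ord0 * ((-1) ^+ k0 * \det (rowsub (g \o lift k0) elim_col0)).
Proof.
move=> gk0; rewrite det_rowsub_col0 (bigD1 k0) //= gk0 big1 ?addr0 // => k kk0.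
case: (unliftP k k0) => [r k0E|k0E]; last by rewrite k0E eqxx in kk0.
by rewrite (@det_rowsub_elim_row0 _ r) ?mulr0 //= -k0E.
Qed.

End PivotElimination.

Lemma row_selection_inj (m l : nat) (f : 'I_l -> 'I_m) :
  row_selection f -> injective f.
Proof.
move=> fsel a b fab.
by case: (ltngtP a b) => [/fsel|/fsel|/val_inj //]; rewrite fab ltnn.
Qed.

Section FirstColumn.
Variables (R : numDomainType) (m l : nat) (hlm : (l.+1 <= m.+1)%N).
Variables (Q : 'M[R]_(m.+1, l.+1)) (Qdom : col_diag_dominant hlm Q).

Lemma col_diag_dominant_col0 : \sum_(i | i != ord0) `|Q i ord0| < Q ord0 ord0.
Proof. by have := Qdom ord0; rewrite (_ : widen_ord _ _ = ord0) //; apply: val_inj. Qed.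

Lemma col_diag_dominant_pivot_gt0 : 0 < Q ord0 ord0.
Proof. by apply: le_lt_trans col_diag_dominant_col0; rewrite sumr_ge0. Qed.

End FirstColumn.

Lemma schur0_dominant (R : realFieldType) (m l : nat) (hlm : (l <= m)%N)
    (Q : 'M[R]_(m.+1, l.+1)) :
  col_diag_dominant (hlm : (l.+1 <= m.+1)%N) Q -> col_diag_dominant hlm (schur0 Q).
Proof.
move=> Qdom j; set w := widen_ord hlm j.
set q := Q ord0 ord0; set b := Q ord0 (lift ord0 j).
pose a i := Q (lift ord0 i) ord0; pose c i := Q (lift ord0 i) (lift ord0 j).
have schurE i : schur0 Q i j = c i - a i * b / q by rewrite !mxE.
have q_gt0 : 0 < q := col_diag_dominant_pivot_gt0 Qdom.
have col0 : `|a w| + \sum_(i | i != w) `|a i| < q.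
  have := col_diag_dominant_col0 Qdom.
  by rewrite big_mkcond big_ord_recl /= add0r (bigD1 w).
have colj : `|b| + \sum_(i | i != w) `|c i| < c w.
  have := Qdom (lift ord0 j).
  rewrite (_ : widen_ord _ _ = lift ord0 w); last exact: val_inj.
  rewrite big_mkcond big_ord_recl (negbTE (neq_lift _ _)) -big_mkcond /=.
  by under eq_bigl => i do rewrite (inj_eq lift_inj).
have sum_schur : \sum_(i | i != w) `|schur0 Q i j|
    <= \sum_(i | i != w) `|c i| + (\sum_(i | i != w) `|a i|) * (`|b| / q).
  rewrite mulr_suml -big_split ler_sum // => i _; rewrite schurE.
  apply: le_trans (ler_normB _ _) _; rewrite lerD2l.
  by rewrite -mulrA normrM normrM normfV (gtr0_norm q_gt0).
have sum_a : (\sum_(i | i != w) `|a i|) * (`|b| / q) <= `|b| - `|a w| * `|b| / q.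
  have -> : `|b| - `|a w| * `|b| / q = (q - `|a w|) * (`|b| / q).
    by field; rewrite gt_eqF.
  by apply: ler_wpM2r; [rewrite divr_ge0 // ltW | lra].
have ab : a w * b / q <= `|a w| * `|b| / q.
  by apply: ler_wpM2r; [rewrite invr_ge0 ltW | rewrite -normrM ler_norm].
rewrite schurE; lra.
Qed.

Section DominantStep.
Variables (R : realFieldType) (m l : nat) (hlm : (l <= m)%N) (Q : 'M[R]_(m.+1, l.+1)).
Let hlmS : (l.+1 <= m.+1)%N := hlm.
Hypothesis Qdom : col_diag_dominant hlmS Q.
Hypothesis schur0_det_max : forall h : 'I_l -> 'I_m, injective h ->
  `|\det (rowsub h (schur0 Q))| <= \det (rowsub (widen_ord hlm) (schur0 Q)).

Let pivot_gt0 : 0 < Q ord0 ord0 := col_diag_dominant_pivot_gt0 Qdom.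
Let pivot_neq0 : Q ord0 ord0 != 0 := lt0r_neq0 pivot_gt0.

Lemma det_first_rows_schur0_ge0 : 0 <= \det (rowsub (widen_ord hlm) (schur0 Q)).
Proof.
by apply: le_trans (normr_ge0 _) (@schur0_det_max (widen_ord hlm) _) => a b [] /val_inj.
Qed.

Lemma elim_col0_det_max (h : 'I_l -> 'I_m.+1) : injective h ->
  `|\det (rowsub h (elim_col0 Q))| <= \det (rowsub (widen_ord hlm) (schur0 Q)).
Proof.
move=> hinj; have [r /eqP hr0|h_ne0] := pickP (fun r => h r == ord0).
  by rewrite (det_rowsub_elim_row0 pivot_neq0 hr0) normr0 det_first_rows_schur0_ge0.
pose h' r := odflt (widen_ord hlm r) (unlift ord0 (h r)).
have hE r : h r = lift ord0 (h' r).
  by rewrite /h'; case: unliftP => [//|hr0]; move: (h_ne0 r); rewrite hr0 eqxx.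
have -> : rowsub h (elim_col0 Q) = rowsub h' (schur0 Q).
  by apply/matrixP => r c; rewrite !mxE (hE r).
by apply: schur0_det_max => r s e; apply: hinj; rewrite !hE e.
Qed.

Lemma det_first_rows_pivot : \det (rowsub (widen_ord hlmS) Q)
  = Q ord0 ord0 * \det (rowsub (widen_ord hlm) (schur0 Q)).
Proof.
rewrite (det_rowsub_pivot pivot_neq0 (k0 := ord0)); last exact: val_inj.
rewrite expr0 mul1r; congr (_ * \det _); apply/matrixP => r c; rewrite !mxE /=.
rewrite (_ : widen_ord hlmS (lift ord0 r) = lift ord0 (widen_ord hlm r)) //.
exact: val_inj.
Qed.

Lemma first_rows_det_max_step (f : 'I_l.+1 -> 'I_m.+1) : injective f ->
  `|\det (rowsub f Q)| <= \det (rowsub (widen_ord hlmS) Q).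
Proof.
move=> finj; rewrite det_first_rows_pivot.
set d := \det (rowsub (widen_ord hlm) (schur0 Q)).
have minor_max k : `|\det (rowsub (f \o lift k) (elim_col0 Q))| <= d.
  exact: elim_col0_det_max (inj_comp finj (@lift_inj _ k)).
have [k0 /eqP fk0|f_ne0] := pickP (fun k => f k == ord0).
  rewrite (det_rowsub_pivot pivot_neq0 fk0) !normrM normrX normrN1 expr1n mul1r.
  by rewrite (gtr0_norm pivot_gt0) ler_pM2l.
rewrite det_rowsub_col0; apply: le_trans (ler_norm_sum _ _ _) _.
apply: le_trans (_ : \sum_k `|Q (f k) ord0| * d <= _).
  apply: ler_sum => k _; rewrite !normrM normrX normrN1 expr1n mul1r.
  exact: ler_wpM2l.
rewrite -mulr_suml; apply: ler_wpM2r; first exact: det_first_rows_schur0_ge0.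
apply: ltW; apply: le_lt_trans (col_diag_dominant_col0 Qdom).
by apply: ler_sum_inj => // k; rewrite f_ne0.
Qed.

End DominantStep.

Theorem first_rows_det_max (R : realFieldType) (l : nat) : forall (m : nat)
    (hlm : (l <= m)%N) (Q : 'M[R]_(m, l)), col_diag_dominant hlm Q ->
  forall f : 'I_l -> 'I_m, injective f ->
  `|\det (rowsub f Q)| <= \det (rowsub (widen_ord hlm) Q).
Proof.
elim: l => [|l IHl] m hlm Q Qdom f finj; first by rewrite !det_mx00 normr1.
case: m hlm Q Qdom f finj => // m hlm Q Qdom.
by apply: first_rows_det_max_step => // h; apply: IHl; apply: schur0_dominant.
Qed.

Theorem lemma2p2 (R : realFieldType) (m l : nat) (hl : (1 <= l)%N) (hlm : (l < m)%N)
  (Q : 'M[R]_(m, l))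
  (hdom : forall j : 'I_l,
     \sum_(i < m | (i : nat) != (j : nat)) `|Q i j| < Q (widen_ord (ltnW hlm) j) j) :
  (row_selection (widen_ord (ltnW hlm))
   /\ first_rows (ltnW hlm) Q = submx_rows Q (widen_ord (ltnW hlm)))
  /\ `|\det (first_rows (ltnW hlm) Q)| = \det (first_rows (ltnW hlm) Q)
  /\ (forall f : 'I_l -> 'I_m, row_selection f ->
        `|\det (submx_rows Q f)| <= \det (first_rows (ltnW hlm) Q)).
Proof.
have first_rows_sel : row_selection (widen_ord (ltnW hlm)) by [].
have S1_max := first_rows_det_max hdom.
have S1_ge0 : 0 <= \det (first_rows (ltnW hlm) Q).
  exact: le_trans (normr_ge0 _) (S1_max _ (row_selection_inj first_rows_sel)).
split=> //; split; first exact: ger0_norm.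
by move=> f /row_selection_inj /S1_max.
Qed.
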